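(* Let $G=(F\cup C,E)$ be a finite bipartite graph with $F\neq\emptyset$ and no isolated vertices. In one iteration of FacilitySelect on $G$, the expected number of edges removed is at least $\sqrt{|E|}$.
   Context: Let $G=(F\cup C,E)$ be a finite bipartite graph with parts $F$ (facilities) and $C$ (clients). The facility graph $G_F=(F,E_F)$ has an edge $\{i,i'\}$ ($i\ne i'$) iff $i$ and $i'$ have a common neighbor in $G$. Write $\deg(\cdot)$, $N(\cdot)$ for degree/neighborhood in $G$, $\deg_F(\cdot)$, $N_F(\cdot)$ for those in $G_F$. One iteration of FacilitySelect: every $i\in F$ independently draws $r_i$ uniformly from $[0,1]$; let $I=\{i\in F: r_i>\max_{i'\in N_F(i)} r_{i'}\}$ (the maximum over the empty set being $-\infty$); then all vertices of $I\cup N(I)$ are deleted from $G$ together with all their incident edges. ''Clients removed'' are the clients in $N(I)$; ''edges removed'' are the edges incident to deleted vertices. FacilitySelect repeats iterations while $F\ne\emptyset$. *)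

From HB Require Import structures.
From mathcomp Require Import all_boot all_order all_algebra.
From mathcomp Require Import perm.
Set Implicit Arguments. Unset Strict Implicit. Unset Printing Implicit Defensive.
Import Order.TTheory GRing.Theory Num.Theory.

(* A finite bipartite graph G = (F ∪ C, E) is given by finite types F
   (facilities) and C (clients) and an adjacency relation adj : F -> C -> bool;
   the edge set is E = {(i,c) | adj i c}. *)

Definition edges (F C : finType) (adj : F -> C -> bool) : {set F * C} :=
  [set p | adj p.1 p.2].

Definition facadj (F C : finType) (adj : F -> C -> bool) (i i' : F) : bool :=
  (i != i') && [exists c, adj i c && adj i' c].

(* The random values r_i are modelled by a uniformly random permutation s of F
   (the relative order of i.i.d. continuous values is a uniform random ordering;
   ties have probability 0). *)
Definition rk (F : finType) (s : {perm F}) (i : F) : nat := enum_rank (s i).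

Definition selected (F C : finType) (adj : F -> C -> bool) (s : {perm F}) : {set F} :=
  [set i | [forall i', facadj adj i i' ==> (rk s i' < rk s i)%N]].

Definition removed_edges (F C : finType) (adj : F -> C -> bool) (s : {perm F})
  : {set F * C} :=
  [set p in edges adj |
     (p.1 \in selected adj s) || [exists i, (i \in selected adj s) && adj i p.2]].

Definition expected_removed (R : numFieldType) (F C : finType) (adj : F -> C -> bool) : R :=
  (\sum_(s : {perm F}) (#|removed_edges adj s|)%:R) / (#|{perm F}|)%:R.

(* Let N[i] be the closed neighbourhood of facility i in the facility graph
   and M_i the set of edges at the clients of i.  Facility i is selected
   exactly when it ranks first in N[i], which happens for a fraction 1/|N[i]|
   of the orderings, and then all of M_i is removed; the sets M_i of selected
   facilities are pairwise disjoint since two selected facilities never share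
   a client.  So the expectation is at least U = sum_i |M_i| / |N[i]|.  As
   |N[i]| <= |M_i| and |N[i]| <= |F|, we get U >= |F| and
   U >= (sum_i |M_i|) / |F| >= |E| / |F|, whence U^2 >= |E|. *)

From HB Require Import structures.
From mathcomp Require Import all_boot all_order all_algebra.
From mathcomp Require Import perm ring.
Import Order.TTheory GRing.Theory Num.Theory.
Set Implicit Arguments. Unset Strict Implicit.

Lemma card_sum_mem (T : finType) (A : {pred T}) : #|A| = \sum_x (x \in A).
Proof. by rewrite -sum1_card big_mkcond; apply: eq_bigr => x _; case: (x \in A). Qed.

Section Orderings.

Variable F : finType.

Definition top_perms (A : {set F}) (j : F) : {set {perm F}} :=
  [set s : {perm F} | [forall k in A, (k != j) ==> (rk s k < rk s j)]].

Lemma rk_inj (s : {perm F}) : injective (rk s).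
Proof. by move=> x y /val_inj/enum_rank_inj/perm_inj. Qed.

(* Composing with the transposition of j1 and j2 exchanges their roles. *)
Lemma card_top_perms_le (A : {set F}) j1 j2 : j1 \in A -> j2 \in A ->
  #|top_perms A j1| <= #|top_perms A j2|.
Proof.
move=> A_j1 A_j2.
rewrite -(card_imset (top_perms A j1) (@mulgI _ (tperm j1 j2))).
apply: subset_leq_card; apply/subsetP => _ /imsetP [s top_s ->].
rewrite inE; apply/forall_inP => k A_k; apply/implyP => k_neq_j2.
move: top_s; rewrite inE => /forall_inP /(_ (tperm j1 j2 k)).
rewrite /rk !permM tpermR.
have -> : tperm j1 j2 k \in A by case: tpermP => // ->.
have -> : tperm j1 j2 k != j1 by rewrite -{2}(tpermR j1 j2) (inj_eq perm_inj).
by apply.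
Qed.

Lemma sum_card_top_perms (A : {set F}) i : i \in A ->
  \sum_(j in A) #|top_perms A j| = #|{perm F}|.
Proof.
move=> A_i; under eq_bigr do rewrite card_sum_mem.
rewrite exchange_big /= [RHS]card_sum_mem; apply: eq_bigr => s _.
have [j0 A_j0 j0_max] := arg_maxnP (rk s) A_i.
have top_j0 : s \in top_perms A j0.
  rewrite inE; apply/forall_inP => k A_k; apply/implyP => k_neq_j0.
  have le_kj0 : rk s k <= rk s j0 := j0_max k A_k.
  rewrite ltn_neqAle le_kj0 andbT.
  by apply: contra k_neq_j0 => /eqP/rk_inj ->.
rewrite (bigD1 j0) //= top_j0 big1 // => j /andP [A_j j_neq_j0].
apply/eqP; rewrite eqb0 inE; apply/negP => /forall_inP /(_ j0 A_j0).
have le_jj0 : rk s j <= rk s j0 := j0_max j A_j.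
by rewrite eq_sym j_neq_j0 ltnNge le_jj0.
Qed.

Lemma card_top_perms (A : {set F}) i : i \in A ->
  #|top_perms A i| * #|A| = #|{perm F}|.
Proof.
move=> A_i; rewrite -(sum_card_top_perms A_i) mulnC -sum_nat_const.
by apply: eq_bigr => j A_j; apply/eqP; rewrite eqn_leq !card_top_perms_le.
Qed.

End Orderings.

Section FacilitySelect.

Variables (F C : finType) (adj : F -> C -> bool).

Definition closed_fnbhd (i : F) : {set F} := [set j | [exists c, adj i c && adj j c]].

Definition client_edges (i : F) : {set F * C} := [set p in edges adj | adj i p.2].

Lemma mem_selected s i : (i \in selected adj s) = (s \in top_perms (closed_fnbhd i) i).
Proof.
rewrite !inE; apply: eq_forallb => j.
by rewrite /facadj inE (eq_sym i j); case: (j != i); case: [exists c, _].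
Qed.

Lemma closed_fnbhd_refl i : (exists c, adj i c) -> i \in closed_fnbhd i.
Proof. by case=> c adj_ic; rewrite inE; apply/existsP; exists c; rewrite adj_ic. Qed.

Lemma card_closed_fnbhd_le i : #|closed_fnbhd i| <= #|client_edges i|.
Proof.
apply: leq_trans (leq_imset_card fst _); apply: subset_leq_card.
apply/subsetP => j; rewrite inE => /existsP [c /andP [adj_ic adj_jc]].
by apply/imsetP; exists (j, c); rewrite // !inE /= adj_ic adj_jc.
Qed.

Lemma card_edges_le_sum_client_edges : #|edges adj| <= \sum_i #|client_edges i|.
Proof.
rewrite card_sum_mem; under [X in _ <= X]eq_bigr do rewrite card_sum_mem.
rewrite [X in _ <= X]exchange_big; apply: leq_sum => p _.
case E_p: (p \in edges adj) => //.
have adj_p : adj p.1 p.2 by move: E_p; rewrite inE.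
by rewrite (bigD1 p.1) //= [p \in client_edges _]inE E_p adj_p.
Qed.

Lemma selected_client_uniq s i j c : i \in selected adj s -> j \in selected adj s ->
  adj i c -> adj j c -> i = j.
Proof.
move=> sel_i sel_j adj_ic adj_jc; apply/eqP/negPn/negP => i_neq_j.
have adj_ij : facadj adj i j by rewrite /facadj i_neq_j; apply/existsP; exists c; rewrite adj_ic.
have adj_ji : facadj adj j i.
  by rewrite /facadj eq_sym i_neq_j; apply/existsP; exists c; rewrite adj_ic adj_jc.
move: sel_i sel_j; rewrite !inE => /forallP /(_ j) /implyP /(_ adj_ij) lt_ji.
by move=> /forallP /(_ i) /implyP /(_ adj_ji) /(ltn_trans lt_ji); rewrite ltnn.
Qed.

Lemma sum_client_edges_selected_le s :
  \sum_(i in selected adj s) #|client_edges i| <= #|removed_edges adj s|.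
Proof.
under eq_bigr do rewrite card_sum_mem.
rewrite exchange_big /= [X in _ <= X]card_sum_mem; apply: leq_sum => p _.
have [/existsP [i /andP [sel_i M_ip]] | no_sel] :=
  boolP [exists i, (i \in selected adj s) && (p \in client_edges i)].
  have -> : p \in removed_edges adj s.
    move: M_ip; rewrite !inE => /andP [-> adj_ip] /=.
    by apply/orP; right; apply/existsP; exists i; rewrite sel_i.
  rewrite (bigD1 i) //= M_ip big1 // => j /andP [sel_j j_neq_i].
  apply/eqP; rewrite eqb0; apply: contra j_neq_i.
  move: M_ip; rewrite !inE => /andP [_ adj_ip] /andP [_ adj_jp].
  by move/(selected_client_uniq sel_j sel_i adj_jp): adj_ip => ->.
rewrite big1 // => j sel_j; apply/eqP; rewrite eqb0; apply: contra no_sel => M_jp.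
by apply/existsP; exists j; rewrite sel_j.
Qed.

(* #|{perm F}| times the bound U, by card_top_perms. *)
Definition weighted_client_edges : nat :=
  \sum_i #|top_perms (closed_fnbhd i) i| * #|client_edges i|.

Lemma weighted_client_edges_le_removed :
  weighted_client_edges <= \sum_(s : {perm F}) #|removed_edges adj s|.
Proof.
apply: (@leq_trans (\sum_(s : {perm F}) \sum_(i in selected adj s) #|client_edges i|));
  last by apply: leq_sum => s _; apply: sum_client_edges_selected_le.
rewrite (exchange_big_dep predT) //=; apply: leq_sum => i _.
by rewrite (eq_bigl _ _ (fun s => mem_selected s i)) sum_nat_const.
Qed.

Section NoIsolatedFacility.

Hypothesis adj_facility : forall i, exists c, adj i c.

Lemma card_F_perm_le_weighted : #|F| * #|{perm F}| <= weighted_client_edges.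
Proof.
rewrite -sum_nat_const; apply: leq_sum => i _.
rewrite -(card_top_perms (closed_fnbhd_refl (adj_facility i))).
by rewrite leq_mul2l card_closed_fnbhd_le orbT.
Qed.

Lemma perm_edges_le_card_F_weighted :
  #|{perm F}| * #|edges adj| <= #|F| * weighted_client_edges.
Proof.
rewrite mulnC (leq_trans (leq_mul card_edges_le_sum_client_edges (leqnn _))) //.
rewrite big_distrl big_distrr /=; apply: leq_sum => i _.
rewrite -(card_top_perms (closed_fnbhd_refl (adj_facility i))).
rewrite mulnCA [X in _ <= X]mulnCA leq_mul2l mulnC leq_mul2r.
by rewrite max_card !orbT.
Qed.

End NoIsolatedFacility.

End FacilitySelect.

Lemma leq_sqr_of_bounds a p e u : 0 < a -> a * p <= u -> p * e <= a * u ->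
  e * p ^ 2 <= u ^ 2.
Proof.
move=> a_gt0 le_ap_u le_pe_au; rewrite -(leq_pmul2l a_gt0).
have -> : a * (e * p ^ 2) = (a * p) * (p * e) by ring.
by rewrite expnS expn1 [X in _ <= X]mulnCA leq_mul.
Qed.

Local Open Scope ring_scope.

Lemma sqrt_le_ratio (R : rcfType) (e t p : nat) : (0 < p)%N -> (e * p ^ 2 <= t ^ 2)%N ->
  Num.sqrt (e%:R : R) <= t%:R / p%:R.
Proof.
move=> p_gt0 le_ep_t.
have ratio_ge0 : 0 <= (t%:R / p%:R : R) by rewrite divr_ge0 ?ler0n.
rewrite -(ger0_norm ratio_ge0) -sqrtr_sqr ler_sqrt ?sqr_ge0 //.
by rewrite expr_div_n ler_pdivlMr ?exprn_gt0 ?ltr0n // -!natrX -natrM ler_nat.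
Qed.

Theorem corollary1 (R : rcfType) (F C : finType) (adj : F -> C -> bool)
  (hF : (0 < #|F|)%N)
  (hFiso : forall i : F, exists c : C, adj i c)
  (hCiso : forall c : C, exists i : F, adj i c) :
  Num.sqrt (#|edges adj|%:R : R) <= expected_removed R adj.
Proof.
rewrite /expected_removed -natr_sum; apply: sqrt_le_ratio.
  by apply/card_gt0P; exists 1%g.
have le_edges_weighted := leq_sqr_of_bounds hF (card_F_perm_le_weighted hFiso)
  (perm_edges_le_card_F_weighted hFiso).
by rewrite (leq_trans le_edges_weighted) // leq_sqr weighted_client_edges_le_removed.
Qed.
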